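(* Let $\mathcal{A}$ be a znz-pattern with $m\ge2$ nonzero diagonal entries such that $D(\mathcal{A})$ has no $k$-cycles with $2\le k\le m$. Then $\mathcal{A}$ is not potentially nilpotent over any field $\mathbb{F}$.
   Context: A znz-pattern is an $n\times n$ matrix with entries in $\{*,0\}$; a realization over $\mathbb{F}$ is a matrix in $M_n(\mathbb{F})$ whose nonzero entries are exactly at the $*$ positions; $\mathcal{A}$ is potentially nilpotent over $\mathbb{F}$ if some realization is nilpotent. The digraph $D(\mathcal{A})$ has vertex set $\{1,\ldots,n\}$ and an arc $(i,j)$ whenever $\mathcal{A}_{i,j}=*$. A $k$-cycle is a sequence of $k$ distinct vertices $i_1,\ldots,i_k$ with arcs $(i_1,i_2),\ldots,(i_{k-1},i_k),(i_k,i_1)$. *)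

From HB Require Import structures.
From mathcomp Require Import all_boot all_order all_algebra.
Set Implicit Arguments. Unset Strict Implicit. Unset Printing Implicit Defensive.
Import GRing.Theory.
Local Open Scope ring_scope.

(* A znz-pattern of order n: an n x n matrix with entries in {*,0};
   true encodes *, false encodes 0. *)
Definition znz_pattern (n : nat) := 'M[bool]_n.

Definition realization (F : fieldType) (n : nat) (P : znz_pattern n)
  (A : 'M[F]_n) : Prop :=
  forall i j, (A i j != 0) = P i j.

Definition nilpotent_mx (F : fieldType) (n : nat) (A : 'M[F]_n) : Prop :=
  exists k : nat, A ^+ k = 0.

Definition potentially_nilpotent (F : fieldType) (n : nat) (P : znz_pattern n)
  : Prop :=
  exists A : 'M[F]_n, realization P A /\ nilpotent_mx A.

Definition arc (n : nat) (P : znz_pattern n) : rel 'I_n := fun i j => P i j.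

Definition has_k_cycle (n : nat) (P : znz_pattern n) (k : nat) : Prop :=
  exists s : seq 'I_n, [/\ size s = k, uniq s & cycle (arc P) s].

Definition num_nonzero_diag (n : nat) (P : znz_pattern n) : nat :=
  #|[set i : 'I_n | P i i]|.

From Pilot Require Import Defs.
From HB Require Import structures.
From mathcomp Require Import all_boot all_order all_algebra.
From mathcomp Require Import fingroup perm.
Set Implicit Arguments. Unset Strict Implicit. Unset Printing Implicit Defensive.
Import GRing.Theory.
Local Open Scope ring_scope.

(* Let A be a realization of the pattern P and consider the
   reversed characteristic polynomial  q(X) = det (1 - X A).
   - If A is nilpotent then 1 - X A is invertible over F[X] (its inverse is
     the finite geometric series), so q is a unit of F[X], i.e. a constant.
   - Expand q by the Leibniz formula.  The term of a permutation s moving the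
     points of a set N is divisible by X^|N|, and it vanishes unless every
     moved point i satisfies P i (s i); in that case each orbit of s is a
     cycle of D(P) of length >= 2, hence of length > m when D(P) has no
     k-cycles for 2 <= k <= m.  So only the identity contributes to the
     coefficient of X^m, which is therefore the product of the -a_ii over the
     m nonzero diagonal entries: nonzero.
   With m >= 1 this contradicts q being constant. *)

Definition short_cycle_free (n : nat) (P : znz_pattern n) (m : nat) : Prop :=
  forall k : nat, (2 <= k)%N -> (k <= m)%N -> ~ has_k_cycle P k.

Section PermutationCycles.
Variables (n : nat) (P : znz_pattern n) (s : 'S_n).

Definition moved : {set 'I_n} := [set i | s i != i].

Lemma orbit_moved i0 x : s i0 != i0 -> x \in orbit s i0 -> s x != x.
Proof.
move=> si0; rewrite -fconnect_orbit.
rewrite (fconnect_sym (@perm_inj _ s)) => /iter_findex hit.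
by apply: contra si0 => /eqP sx; rewrite -hit iter_fix ?sx.
Qed.

Lemma moved_orbit_size i0 : s i0 != i0 -> (2 <= size (orbit s i0))%N.
Proof.
move=> si0; apply: (uniq_leq_size (s1 := [:: i0; s i0])).
  by rewrite /= inE eq_sym si0.
by apply/allP; rewrite /= in_orbit mem_orbit ?in_orbit.
Qed.

Hypothesis s_arcs : forall i, s i != i -> P i (s i).

Lemma orbit_is_cycle i0 : s i0 != i0 -> has_k_cycle P (size (orbit s i0)).
Proof.
move=> si0; exists (orbit s i0); split => //; first exact: orbit_uniq.
have moved_arcs : {in [pred x | s x != x] &, subrel (frel s) (Defs.arc P)}.
  by move=> x y sx _ /eqP <-; apply: s_arcs.
apply: (sub_in_cycle moved_arcs); last exact: (cycle_orbit (@perm_inj _ s)).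
by apply/allP => x /(orbit_moved si0).
Qed.

(* Without short cycles, such an s (if not the identity) moves more than m
   points, since it moves every point of a cycle of D(P). *)
Lemma moved_card_gt m : s != 1%g -> short_cycle_free P m -> (m < #|moved|)%N.
Proof.
move=> s_ne1 no_short; rewrite ltnNge; apply/negP => card_le.
have [i0 si0] : exists i0, s i0 != i0.
  apply/existsP; apply: contraR s_ne1; rewrite negb_exists => /forallP fixed.
  by apply/eqP/permP => x; rewrite perm1; apply/eqP/negPn.
have orbit_sub : (size (orbit s i0) <= #|moved|)%N.
  rewrite cardE; apply: uniq_leq_size; first exact: orbit_uniq.
  by move=> x /(orbit_moved si0) sx; rewrite mem_enum inE.
exact: no_short (moved_orbit_size si0) (leq_trans orbit_sub card_le)
  (orbit_is_cycle si0).
Qed.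

End PermutationCycles.

Lemma geometric_inverse (R : pzRingType) (B : R) k :
  B ^+ k = 0 -> (1 - B) * \sum_(i < k) B ^+ i = 1.
Proof. by move=> Bk; apply/eqP; rewrite -eqr_opp -mulNr opprB -subrX1 Bk sub0r. Qed.

(* In prod_i (1 - c_i X), the coefficient of X^d, d the number of nonzero
   c_i, is the leading coefficient prod_(c_i != 0) (-c_i). *)
Lemma coef_prod_1subXC (F : fieldType) (I : finType) (c : I -> F) :
  (\prod_i (1 - 'X * (c i)%:P))`_#|[pred i | c i != 0]| =
  \prod_(i | c i != 0) - c i.
Proof.
rewrite (bigID (fun i => c i != 0)) /= [X in _ * X]big1 ?mulr1; last first.
  by move=> i /negPn/eqP ->; rewrite mulr0 subr0.
have factorE i : 1 - 'X * (c i)%:P = (- c i)%:P * 'X + 1%:P.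
  by rewrite polyCN mulNr mulrC addrC.
have size_factor i : c i != 0 -> size (1 - 'X * (c i)%:P) = 2%N.
  by move=> ci; rewrite factorE size_MXaddC polyC_eq0 oppr_eq0 (negbTE ci)
    size_polyC oppr_eq0 ci.
have size_prod_factors :
    size (\prod_(i | c i != 0) (1 - 'X * (c i)%:P)) = #|[pred i | c i != 0]|.+1.
  rewrite size_prod => [|i ci]; last by rewrite -size_poly_eq0 size_factor.
  by rewrite (eq_bigr (fun=> 2%N)) // sum_nat_const muln2 -addnn -addSn addnK.
rewrite -[X in _`_X]/(#|[pred i | c i != 0]|.+1.-1) -size_prod_factors.
rewrite -lead_coefE lead_coef_prod; apply: eq_bigr => i ci.
by rewrite lead_coefE size_factor // factorE coefD coefMX coefC /= coefC addr0.
Qed.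

Section ReversedCharPoly.
Variables (F : fieldType) (n : nat).

Definition xpencil (A : 'M[F]_n.+1) : 'M[{poly F}]_n.+1 :=
  1%:M - 'X *: map_mx polyC A.

Definition rev_charpoly (A : 'M[F]_n.+1) : {poly F} := \det (xpencil A).

Lemma xpencilE A i j : xpencil A i j = (i == j)%:R - 'X * (A i j)%:P.
Proof. by rewrite !mxE. Qed.

(* For nilpotent A, 1 - X A is invertible, so q_A is a constant. *)
Lemma rev_charpoly_nilpotent A k : A ^+ k = 0 -> size (rev_charpoly A) = 1%N.
Proof.
move=> Ak; set B := 'X *: map_mx polyC A.
have Bk : B ^+ k = 0 by rewrite exprZn -rmorphXn /= Ak map_mx0 scaler0.
have : rev_charpoly A \is a GRing.unit.
  apply/unitrP; exists (\det (\sum_(i < k) B ^+ i)).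
  by rewrite mulrC -det_mulmx mulmxE /xpencil geometric_inverse // det1.
by rewrite poly_unitE => /andP[/eqP].
Qed.

(* The Leibniz term of s is divisible by X^|moved s|. *)
Lemma leibniz_term_coef_small A (s : 'S_n.+1) m :
  (m < #|moved s|)%N -> (\prod_i xpencil A i (s i))`_m = 0.
Proof.
move=> m_small; rewrite (bigID (mem (moved s))) /=.
have -> : \prod_(i in moved s) xpencil A i (s i) =
          'X^#|moved s| * \prod_(i in moved s) - (A i (s i))%:P.
  rewrite -prodr_const -big_split /=; apply: eq_bigr => i; rewrite inE => si.
  by rewrite xpencilE eq_sym (negbTE si) sub0r mulrN.
by rewrite -mulrA coefXnM m_small.
Qed.

Variables (P : znz_pattern n.+1) (A : 'M[F]_n.+1).
Hypothesis A_realizes : realization P A.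

(* For s != 1 the Leibniz term has no X^m coefficient: either it contains a
   zero entry, or s moves points along arcs and hence moves > m points. *)
Lemma leibniz_term_coef_pattern (s : 'S_n.+1) m :
  s != 1%g -> short_cycle_free P m -> (\prod_i xpencil A i (s i))`_m = 0.
Proof.
move=> s_ne1 no_short.
have [s_arcs | ] := boolP [forall i, (s i != i) ==> P i (s i)].
  apply: leibniz_term_coef_small; apply: moved_card_gt s_ne1 no_short.
  by move=> i; apply/implyP; move/forallP: s_arcs.
rewrite negb_forall => /existsP [i]; rewrite negb_imply => /andP [si not_arc].
rewrite (bigD1 i) //= xpencilE eq_sym (negbTE si).
have -> : A i (s i) = 0 by apply/eqP/negbNE; rewrite A_realizes.
by rewrite mulr0 subr0 mul0r coef0.
Qed.

Lemma coef_rev_charpoly : short_cycle_free P (num_nonzero_diag P) ->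
  (rev_charpoly A)`_(num_nonzero_diag P) = \prod_(i | P i i) - A i i.
Proof.
move=> no_short; rewrite /rev_charpoly /determinant coef_sum (bigD1 1%g) //=.
rewrite [X in _ + X]big1 ?addr0 => [|s s_ne1]; last first.
  by rewrite mulr_sign; case: ifP; rewrite ?coefN leibniz_term_coef_pattern ?oppr0.
have diag_card : num_nonzero_diag P = #|[pred i | A i i != 0]|.
  by rewrite /num_nonzero_diag; apply: eq_card => i; rewrite !inE A_realizes.
rewrite odd_perm1 expr0 mul1r diag_card.
under eq_bigr => i _ do rewrite perm1 xpencilE eqxx mulr1n.
by rewrite coef_prod_1subXC; apply: eq_bigl => i; rewrite A_realizes.
Qed.

End ReversedCharPoly.

Theorem corollary4p5 (n : nat) (P : znz_pattern n) :
  (2 <= num_nonzero_diag P)%N ->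
  (forall k : nat, (2 <= k)%N -> (k <= num_nonzero_diag P)%N -> ~ has_k_cycle P k) ->
  forall F : fieldType, ~ potentially_nilpotent F P.
Proof.
move=> two_le no_short F [A [A_realizes [k Ak]]].
case: n P A A_realizes Ak two_le no_short => [|n] P A A_realizes Ak two_le no_short.
  by move: two_le; rewrite /num_nonzero_diag eq_card0 // => -[].
have q_const := rev_charpoly_nilpotent Ak.
have top_coef := coef_rev_charpoly A_realizes no_short.
rewrite nth_default ?q_const ?(leq_trans _ two_le) // in top_coef.
have : \prod_(i | P i i) - A i i != 0.
  by apply/prodf_neq0 => i Pii; rewrite oppr_eq0 A_realizes.
by rewrite -top_coef eqxx.
Qed.
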